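(* Under the setting below, for every $k\in\mathbb{N}_0$: $Z_k(0)<0$ and $\lim_{\tau\to\tau^{*-}}Z_k(\tau)=-\infty$. Consequently, if $Z_k$ has finitely many zeros in $[0,\tau^* )$ and changes sign at each of them, then the number of zeros is even. Moreover, $Z_{k+1}(\tau)<Z_k(\tau)$ for all $\tau\in[0,\tau^* )$, and if $Z_k$ has no root in $[0,\tau^* )$ then $Z_j$ has no root in $[0,\tau^* )$ for every $j>k$.
   Context: Let $\delta>0$ and $\beta:[0,+\infty)\to(0,+\infty)$ continuously differentiable, strictly decreasing, with $\beta'(s)<0$ for $s>0$, $\lim_{S\to+\infty}\beta(S)=0$, and $\delta<\beta(0)$. Let $\bar\tau:=\frac1\delta\ln\!\big(\frac{2\beta(0)}{\delta+\beta(0)}\big)$, $\beta^{-1}$ the inverse of $\beta$ on $(0,\beta(0)]$, and for $\tau\in[0,\bar\tau)$: $S^*(\tau)=\beta^{-1}\!\big(\frac{\delta}{2e^{-\delta\tau}-1}\big)$, $N^*(\tau)=(2e^{-\delta\tau}-1)e^{\delta\tau}S^*(\tau)$, $A(\tau)=\delta+\beta(S^*(\tau))$, $B(\tau)=[2\beta(S^*(\tau))+N^*(\tau)\beta'(S^*(\tau))]e^{-\delta\tau}$. Let $\chi(y)=y\beta'(y)$ and assume (H$_1$) $\chi$ is decreasing on $[0,\beta^{-1}(\delta)]$ and (H$_2$) $\chi(\beta^{-1}(\delta))<-4\delta$. Then there is a unique $\tau^*\in(0,\bar\tau)$ such that $A(\tau)<|B(\tau)|$ (with $B(\tau)<0$)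 exactly for $\tau\in[0,\tau^* )$. For $k\in\mathbb{N}_0$ (nonnegative integers) and $\tau\in[0,\tau^* )$ define $\tau_k(\tau)=\dfrac{\arccos(A(\tau)/B(\tau))+2k\pi}{\sqrt{B(\tau)^2-A(\tau)^2}}$ and $Z_k(\tau)=\tau-\tau_k(\tau)$, with $\arccos$ valued in $[0,\pi]$. *)

From Stdlib Require Import Reals Lra List ClassicalEpsilon.
Open Scope R_scope.

(* beta^{-1} on (0, beta(0)]: some s >= 0 with beta s = y (unique when beta is
   strictly decreasing on [0,+oo) and y in (0, beta 0]). *)
Definition beta_inv (beta : R -> R) (y : R) : R :=
  epsilon (inhabits 0) (fun s => 0 <= s /\ beta s = y).

Definition tau_bar (beta : R -> R) (delta : R) : R :=
  / delta * ln (2 * beta 0 / (delta + beta 0)).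

Definition Sstar (beta : R -> R) (delta tau : R) : R :=
  beta_inv beta (delta / (2 * exp (- delta * tau) - 1)).

Definition Nstar (beta : R -> R) (delta tau : R) : R :=
  (2 * exp (- delta * tau) - 1) * exp (delta * tau) * Sstar beta delta tau.

Definition Acoef (beta : R -> R) (delta tau : R) : R :=
  delta + beta (Sstar beta delta tau).

(* dbeta plays the role of beta' *)
Definition Bcoef (beta dbeta : R -> R) (delta tau : R) : R :=
  (2 * beta (Sstar beta delta tau)
     + Nstar beta delta tau * dbeta (Sstar beta delta tau)) * exp (- delta * tau).

Definition tau_k (beta dbeta : R -> R) (delta : R) (k : nat) (tau : R) : R :=
  (acos (Acoef beta delta tau / Bcoef beta dbeta delta tau) + 2 * INR k * PI)
  / sqrt (Bcoef beta dbeta delta tau ^ 2 - Acoef beta delta tau ^ 2).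

Definition Zk (beta dbeta : R -> R) (delta : R) (k : nat) (tau : R) : R :=
  tau - tau_k beta dbeta delta k tau.

Definition changes_sign_at (f : R -> R) (t : R) : Prop :=
  exists eps, 0 < eps /\
    ((forall s, t - eps < s < t -> f s < 0) /\ (forall s, t < s < t + eps -> 0 < f s)
     \/
     (forall s, t - eps < s < t -> 0 < f s) /\ (forall s, t < s < t + eps -> f s < 0)).

From Stdlib Require Import Reals Lra List Arith Lia ClassicalEpsilon Ranalysis5.
Open Scope R_scope.

(* Below tau_star the coefficients satisfy 0 < A < |B| = -B, so A/B lies in
   (-1, 0), arccos (A/B) >= PI/2 and the discriminant D = B^2 - A^2 is positive;
   thus Z_k = tau - (arccos (A/B) + 2 k PI) / sqrt D. *)

(* Pointwise forms of the Stdlib continuity combinators, which are stated for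
   the function-level operations [plus_fct], [mult_fct], ... *)
Lemma cont_plus f g x :
  continuity_pt f x -> continuity_pt g x -> continuity_pt (fun t => f t + g t) x.
Proof. intros; apply (continuity_pt_plus f g); auto. Qed.

Lemma cont_minus f g x :
  continuity_pt f x -> continuity_pt g x -> continuity_pt (fun t => f t - g t) x.
Proof. intros; apply (continuity_pt_minus f g); auto. Qed.

Lemma cont_mult f g x :
  continuity_pt f x -> continuity_pt g x -> continuity_pt (fun t => f t * g t) x.
Proof. intros; apply (continuity_pt_mult f g); auto. Qed.

Lemma cont_div f g x :
  continuity_pt f x -> continuity_pt g x -> g x <> 0 ->
  continuity_pt (fun t => f t / g t) x.
Proof. intros; apply (continuity_pt_div f g); auto. Qed.

Lemma cont_const c x : continuity_pt (fun _ => c) x.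
Proof. apply (continuity_pt_const (fct_cte c)); intros a b; reflexivity. Qed.

Lemma cont_id x : continuity_pt (fun t => t) x.
Proof. apply derivable_continuous_pt, derivable_pt_id. Qed.

Lemma cont_comp f g x :
  continuity_pt g x -> continuity_pt f (g x) -> continuity_pt (fun t => f (g t)) x.
Proof. intros; apply (continuity_pt_comp g f); auto. Qed.

Lemma cont_sq f x : continuity_pt f x -> continuity_pt (fun t => f t ^ 2) x.
Proof.
  intros Hf; apply (cont_comp (fun y => y ^ 2) f); auto.
  apply derivable_continuous_pt, derivable_pt_pow.
Qed.

Lemma cont_exp_lin c x : continuity_pt (fun t => exp (c * t)) x.
Proof.
  apply (cont_comp exp (fun t => c * t)).
  - apply cont_mult; [apply cont_const | apply cont_id].
  - apply derivable_continuous_pt, derivable_pt_exp.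
Qed.

(* Continuity at [x0] gives the usual epsilon-delta bound, including the point
   [x0] itself. *)
Lemma continuity_pt_bound f x0 : continuity_pt f x0 -> forall eps, 0 < eps ->
  exists alp, 0 < alp /\ forall x, Rabs (x - x0) < alp -> Rabs (f x - f x0) < eps.
Proof.
  intros Hf eps Heps. destruct (Hf eps Heps) as [alp [Halp Hx]].
  exists alp; split; [exact Halp|]. intros x Hxa.
  destruct (Req_dec x x0) as [->|Hne].
  - rewrite Rminus_diag, Rabs_R0; lra.
  - apply (Hx x). repeat split; auto.
Qed.

Section DecreasingInverse.
Variable beta : R -> R.
Hypothesis beta_pos : forall s, 0 <= s -> 0 < beta s.
Hypothesis beta_cont : forall s, 0 <= s -> continuity_pt beta s.
Hypothesis beta_decr : forall s t, 0 <= s -> s < t -> beta t < beta s.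
Hypothesis beta_vanish : forall eps, 0 < eps -> exists M, forall S, M < S -> beta S < eps.

Lemma beta_below y : 0 < y -> exists M, 0 < M /\ beta M < y.
Proof.
  intros Hy. destruct (beta_vanish y Hy) as [M HM].
  exists (Rmax M 0 + 1). pose proof (Rmax_l M 0); pose proof (Rmax_r M 0).
  split; [lra | apply HM; lra].
Qed.

Lemma beta_onto y : 0 < y <= beta 0 -> exists s, 0 <= s /\ beta s = y.
Proof.
  intros [Hy0 Hy1].
  destruct (Req_dec y (beta 0)) as [->|Hne]; [exists 0; split; [lra|auto]|].
  destruct (beta_below y Hy0) as [M [HM HbM]].
  destruct (IVT_interv (fun s => y - beta s) 0 M) as [z [Hz1 Hz2]];
    [intros a Ha; apply cont_minus; [apply cont_const | apply beta_cont; lra]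
    | lra | lra | lra |].
  exists z; split; lra.
Qed.

Lemma beta_inv_spec y :
  0 < y <= beta 0 -> 0 <= beta_inv beta y /\ beta (beta_inv beta y) = y.
Proof. intros Hy. unfold beta_inv. apply epsilon_spec, beta_onto, Hy. Qed.

(* The inverse of a continuous strictly monotone function is continuous; we
   apply the Stdlib version to the increasing [s |-> - beta s] on [0, M]. *)
Lemma beta_inv_continuous y0 : 0 < y0 < beta 0 -> continuity_pt (beta_inv beta) y0.
Proof.
  intros Hy0. destruct (beta_below y0 (proj1 Hy0)) as [M [HM HbM]].
  assert (Hrange : forall x, - beta 0 <= x <= - beta M -> 0 < - x <= beta 0)
    by (intros x Hx; pose proof (beta_pos M (Rlt_le _ _ HM)); lra).
  set (g := fun x => beta_inv beta (- x)).
  assert (Hg : continuity_pt g (- y0)).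
  { apply (continuity_pt_recip_interv (fun s => - beta s) g 0 M HM).
    - intros s t Hs Hst _; pose proof (beta_decr s t Hs Hst); lra.
    - intros x Hx1 Hx2; unfold comp, g, id.
      rewrite (proj2 (beta_inv_spec (- x) (Hrange x (conj Hx1 Hx2)))); lra.
    - intros x Hx1 Hx2; unfold g.
      destruct (beta_inv_spec (- x) (Hrange x (conj Hx1 Hx2))) as [Hs Hbs].
      split; [exact Hs|].
      destruct (Rle_lt_dec (beta_inv beta (- x)) M) as [|Hlt]; [assumption|].
      pose proof (beta_decr M _ ltac:(lra) Hlt); lra.
    - intros a Ha; apply (continuity_pt_opp beta), beta_cont; lra.
    - lra. }
  apply (continuity_pt_locally_ext (fun y => g (- y)) _ 1); [lra| |].
  - intros y _; unfold g; rewrite Ropp_involutive; reflexivity.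
  - apply (cont_comp g (fun y => - y)); [|exact Hg].
    apply (continuity_pt_opp (fun y => y)), cont_id.
Qed.

End DecreasingInverse.

Definition decay (delta tau : R) : R := 2 * exp (- delta * tau) - 1.

(* For [tau] in [0, tau_bar) the decay factor is positive and the level
   [delta / decay] at which [beta] is inverted lies in [delta, beta 0); this is
   exactly what the choice of [tau_bar] is made for. *)
Lemma decay_range (beta : R -> R) (delta tau : R) :
  0 < delta -> delta < beta 0 -> 0 <= tau < tau_bar beta delta ->
  0 < decay delta tau /\ delta <= delta / decay delta tau < beta 0.
Proof.
  intros Hd Hb [Ht0 Ht1]. unfold tau_bar in Ht1. unfold decay.
  set (b := beta 0) in *.
  assert (Hlog : delta * tau < ln (2 * b / (delta + b))).
  { apply (Rmult_lt_compat_l delta) in Ht1; [|exact Hd].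
    rewrite <- Rmult_assoc, Rinv_r, Rmult_1_l in Ht1; lra. }
  apply exp_increasing in Hlog.
  rewrite exp_ln in Hlog by (apply Rdiv_lt_0_compat; lra).
  assert (Hinv : exp (- delta * tau) * exp (delta * tau) = 1)
    by (rewrite <- exp_plus, <- exp_0; f_equal; ring).
  assert (Hle1 : exp (- delta * tau) <= 1).
  { rewrite <- exp_0. destruct (Req_dec tau 0) as [->|]; [right; f_equal; ring|].
    left; apply exp_increasing; nra. }
  pose proof (exp_pos (delta * tau)).
  set (u := exp (- delta * tau)) in *.
  assert (Hu : delta + b < 2 * b * u).
  { unfold Rdiv in Hlog.
    apply (Rmult_lt_compat_r (delta + b)) in Hlog; [|lra].
    rewrite Rmult_assoc, Rinv_l in Hlog; nra. }
  assert (Hpos : 0 < 2 * u - 1) by nra.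
  split; [exact Hpos|]. split.
  - apply (Rmult_le_reg_r (2 * u - 1)); [exact Hpos|].
    unfold Rdiv; rewrite Rmult_assoc, Rinv_l by lra; nra.
  - apply (Rmult_lt_reg_r (2 * u - 1)); [exact Hpos|].
    unfold Rdiv; rewrite Rmult_assoc, Rinv_l by lra; nra.
Qed.

Lemma decay_continuous (delta tau : R) :
  continuity_pt (decay delta) tau.
Proof.
  apply cont_minus; [|apply cont_const].
  apply cont_mult; [apply cont_const | apply cont_exp_lin].
Qed.

Section Coefficients.
Variables (delta : R) (beta dbeta : R -> R).
Hypothesis delta_pos : 0 < delta.
Hypothesis beta_pos : forall s, 0 <= s -> 0 < beta s.
Hypothesis beta_cont : forall s, 0 <= s -> continuity_pt beta s.
Hypothesis dbeta_cont : forall s, 0 <= s -> continuity_pt dbeta s.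
Hypothesis beta_decr : forall s t, 0 <= s -> s < t -> beta t < beta s.
Hypothesis beta_vanish : forall eps, 0 < eps -> exists M, forall S, M < S -> beta S < eps.
Hypothesis delta_lt_beta0 : delta < beta 0.

Lemma Sstar_spec tau : 0 <= tau < tau_bar beta delta ->
  0 <= Sstar beta delta tau /\ beta (Sstar beta delta tau) = delta / decay delta tau.
Proof.
  intros Ht. destruct (decay_range beta delta tau delta_pos delta_lt_beta0 Ht) as [_ Hy].
  apply beta_inv_spec; auto; lra.
Qed.

Lemma Sstar_continuous tau : 0 <= tau < tau_bar beta delta ->
  continuity_pt (Sstar beta delta) tau.
Proof.
  intros Ht. destruct (decay_range beta delta tau delta_pos delta_lt_beta0 Ht) as [Hd Hy].
  apply (cont_comp (beta_inv beta) (fun t => delta / decay delta t)).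
  - apply cont_div; [apply cont_const | apply decay_continuous | lra].
  - apply beta_inv_continuous; auto; lra.
Qed.

Lemma along_Sstar_continuous (f : R -> R) tau :
  (forall s, 0 <= s -> continuity_pt f s) -> 0 <= tau < tau_bar beta delta ->
  continuity_pt (fun t => f (Sstar beta delta t)) tau.
Proof.
  intros Hf Ht. apply (cont_comp f (Sstar beta delta)).
  - apply Sstar_continuous, Ht.
  - apply Hf, (Sstar_spec tau Ht).
Qed.

Lemma Acoef_continuous tau : 0 <= tau < tau_bar beta delta ->
  continuity_pt (Acoef beta delta) tau.
Proof.
  intros Ht. apply cont_plus; [apply cont_const | apply along_Sstar_continuous; auto].
Qed.

Lemma Bcoef_continuous tau : 0 <= tau < tau_bar beta delta ->
  continuity_pt (Bcoef beta dbeta delta) tau.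
Proof.
  intros Ht. apply cont_mult; [|apply cont_exp_lin].
  apply cont_plus; [apply cont_mult; [apply cont_const | apply along_Sstar_continuous; auto]|].
  apply cont_mult; [|apply along_Sstar_continuous; auto].
  apply cont_mult; [|apply Sstar_continuous, Ht].
  apply cont_mult; [apply decay_continuous | apply cont_exp_lin].
Qed.

End Coefficients.

(* [count_below l t] is the number of entries of [l] strictly below [t]; the
   parity argument tracks it as [t] sweeps through the zeros of a function. *)
Definition below (t x : R) : bool := if Rlt_dec x t then true else false.
Definition count_below (l : list R) (t : R) : nat := length (filter (below t) l).

Lemma below_cases t x : if below t x then x < t else t <= x.
Proof. unfold below; destruct (Rlt_dec x t); lra. Qed.

Lemma gap_below (l : list R) (r : R) :
  exists a, a < r /\ forall x, In x l -> x < r -> x < a.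
Proof.
  induction l as [|y l [a [Har Ha]]].
  - exists (r - 1); split; [lra | intros x []].
  - destruct (Rlt_dec y r).
    + exists (Rmax a ((y + r) / 2)).
      pose proof (Rmax_l a ((y + r) / 2)); pose proof (Rmax_r a ((y + r) / 2)).
      split; [apply Rmax_lub_lt; lra|].
      intros x [->|Hx] Hxr; [lra|]. pose proof (Ha x Hx Hxr); lra.
    + exists a; split; [exact Har|]. intros x [->|Hx] Hxr; [lra | auto].
Qed.

Lemma last_below (l : list R) (t x0 : R) : In x0 l -> x0 < t ->
  exists r, In r l /\ r < t /\ forall x, In x l -> x < t -> x <= r.
Proof.
  revert x0. induction l as [|y l IH]; intros x0 Hin Hx0; [destruct Hin|].
  destruct (classic (exists x1, In x1 l /\ x1 < t)) as [[x1 [Hx1 Hx1t]]|Hno].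
  - destruct (IH x1 Hx1 Hx1t) as [r [Hr [Hrt Hmax]]].
    destruct (Rlt_dec y t).
    + exists (Rmax y r). split; [|split; [apply Rmax_lub_lt; auto|]].
      * unfold Rmax; destruct (Rle_dec y r); [right | left]; auto.
      * intros x [->|Hx] Hxt; [apply Rmax_l|].
        pose proof (Rmax_r y r); pose proof (Hmax x Hx Hxt); lra.
    + exists r; split; [right; exact Hr|split; [exact Hrt|]].
      intros x [->|Hx] Hxt; [lra | auto].
  - destruct Hin as [->|Hin]; [|exfalso; apply Hno; eauto].
    exists x0; split; [left; reflexivity | split; [exact Hx0|]].
    intros x [->|Hx] Hxt; [lra | exfalso; apply Hno; eauto].
Qed.

Lemma count_below_pos (l : list R) (t : R) :
  count_below l t <> 0%nat -> exists x, In x l /\ x < t.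
Proof.
  unfold count_below. destruct (filter (below t) l) as [|x f] eqn:E; [simpl; lia|].
  intros _. assert (Hx : In x (filter (below t) l)) by (rewrite E; left; reflexivity).
  apply filter_In in Hx as [Hx Hb]. exists x; split; [exact Hx|].
  unfold below in Hb; destruct (Rlt_dec x t); [assumption | discriminate].
Qed.

Lemma count_below_zero (l : list R) (t x : R) :
  count_below l t = 0%nat -> In x l -> ~ x < t.
Proof.
  intros H Hx Hxt. unfold count_below in H.
  assert (Hf : In x (filter (below t) l)).
  { apply filter_In; split; [exact Hx|]. unfold below; destruct (Rlt_dec x t); auto. }
  destruct (filter (below t) l); [destruct Hf | discriminate].
Qed.

Lemma count_below_const (l : list R) (a b : R) : a < b ->
  (forall x, In x l -> ~ (a <= x < b)) -> count_below l b = count_below l a.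
Proof.
  intros Hab. unfold count_below.
  induction l as [|y l IH]; intros H; [reflexivity|].
  assert (Hy := H y (or_introl eq_refl)).
  assert (IH' := IH (fun x Hx => H x (or_intror Hx))).
  pose proof (below_cases b y); pose proof (below_cases a y); simpl.
  destruct (below b y), (below a y); simpl; rewrite ?IH'; try reflexivity;
    exfalso; apply Hy; lra.
Qed.

Lemma count_below_step (l : list R) (a b r : R) : NoDup l -> a < b -> In r l ->
  a <= r < b -> (forall x, In x l -> a <= x < b -> x = r) ->
  count_below l b = S (count_below l a).
Proof.
  intros Hnd Hab. induction Hnd as [|y l Hy Hnd IH]; intros Hr Hrab H; [destruct Hr|].
  destruct Hr as [->|Hr].
  - assert (Hs : count_below l b = count_below l a).
    { apply count_below_const; [exact Hab|]. intros x Hx Hxab.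
      rewrite (H x (or_intror Hx) Hxab) in Hx. contradiction. }
    unfold count_below in *.
    pose proof (below_cases b r); pose proof (below_cases a r); simpl.
    destruct (below b r), (below a r); simpl; rewrite ?Hs; try reflexivity; lra.
  - assert (Hyab : ~ (a <= y < b)).
    { intros Hyab. rewrite (H y (or_introl eq_refl) Hyab) in Hy. contradiction. }
    assert (IH' := IH Hr Hrab (fun x Hx => H x (or_intror Hx))).
    unfold count_below in *.
    pose proof (below_cases b y); pose proof (below_cases a y); simpl.
    destruct (below b y), (below a y); simpl; rewrite ?IH'; try reflexivity;
      exfalso; apply Hyab; lra.
Qed.

Lemma count_below_all (l : list R) (t : R) :
  (forall x, In x l -> x < t) -> count_below l t = length l.
Proof.
  unfold count_below. induction l as [|y l IH]; intros H; [reflexivity|].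
  pose proof (below_cases t y) as Hy; simpl.
  destruct (below t y); [simpl; f_equal; auto with datatypes|].
  pose proof (H y (or_introl eq_refl)); lra.
Qed.

Section SignChanges.
Variables (Z : R -> R) (T : R) (l : list R).
Hypothesis Z_cont : forall t, 0 <= t < T -> continuity_pt Z t.
Hypothesis Z0_neg : Z 0 < 0.
Hypothesis l_nodup : NoDup l.
Hypothesis l_zeros : forall t, In t l <-> (0 <= t < T /\ Z t = 0).
Hypothesis l_changes : forall t, In t l -> changes_sign_at Z t.

Lemma sign_const a b : 0 <= a -> a < b -> b < T ->
  (forall z, a <= z <= b -> Z z <> 0) -> (0 < Z a <-> 0 < Z b).
Proof.
  intros Ha Hab HbT Hnz.
  assert (Za := Hnz a ltac:(lra)). assert (Zb := Hnz b ltac:(lra)).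
  split; intros H.
  - destruct (Rlt_le_dec 0 (Z b)) as [|Hb]; [assumption|]. exfalso.
    destruct (IVT_interv (fun x => - Z x) a b) as [z [Hz1 Hz2]]; try lra.
    + intros x Hx. apply (continuity_pt_opp Z), Z_cont; lra.
    + apply (Hnz z Hz1); lra.
  - destruct (Rlt_le_dec 0 (Z a)) as [|Ha']; [assumption|]. exfalso.
    destruct (IVT_interv Z a b) as [z [Hz1 Hz2]]; try lra.
    + intros x Hx. apply Z_cont; lra.
    + apply (Hnz z Hz1); lra.
Qed.

Lemma negative_before_zeros t : 0 <= t < T -> Z t <> 0 ->
  count_below l t = 0%nat -> Z t < 0.
Proof.
  intros Ht Hzt Hcnt. destruct (Req_dec t 0) as [->|Ht0]; [exact Z0_neg|].
  destruct (Rlt_le_dec 0 (Z t)) as [Hpos|]; [exfalso|lra].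
  apply (sign_const 0 t) in Hpos; [lra | lra | lra | lra |].
  intros z Hz Hz0. destruct (Req_dec z t) as [->|Hne]; [contradiction|].
  apply (count_below_zero l t z Hcnt); [apply l_zeros; split; [lra | exact Hz0] | lra].
Qed.

Lemma cross_last_zero t m : 0 <= t < T -> Z t <> 0 -> count_below l t = S m ->
  exists s, 0 <= s < t /\ Z s <> 0 /\ count_below l s = m /\ (0 < Z s <-> Z t < 0).
Proof.
  intros Ht Hzt Hcnt.
  destruct (count_below_pos l t ltac:(lia)) as [x0 [Hx0 Hx0t]].
  destruct (last_below l t x0 Hx0 Hx0t) as [r [Hr [Hrt Hmax]]].
  destruct (proj1 (l_zeros r) Hr) as [Hr0 Zr].
  assert (Hrpos : 0 < r) by (destruct (Req_dec r 0) as [E|]; [rewrite E in Zr|]; lra).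
  destruct (l_changes r Hr) as [eps [Heps Hsides]].
  destruct (gap_below l r) as [a [Har Ha]].
  set (lo := Rmax (Rmax a (r - eps)) 0).
  assert (Hlo : a <= lo /\ r - eps <= lo /\ 0 <= lo /\ lo < r).
  { unfold lo. pose proof (Rmax_l (Rmax a (r - eps)) 0).
    pose proof (Rmax_r (Rmax a (r - eps)) 0).
    pose proof (Rmax_l a (r - eps)); pose proof (Rmax_r a (r - eps)).
    repeat split; try lra. apply Rmax_lub_lt; [apply Rmax_lub_lt|]; lra. }
  set (hi := Rmin (r + eps) t).
  assert (Hhi : r < hi /\ hi <= r + eps /\ hi <= t).
  { unfold hi. pose proof (Rmin_l (r + eps) t); pose proof (Rmin_r (r + eps) t).
    repeat split; try lra. apply Rmin_glb_lt; lra. }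
  set (s := (lo + r) / 2). set (u := (r + hi) / 2).
  assert (Hopp : Z s <> 0 /\ Z u <> 0 /\ (0 < Z s <-> Z u < 0)).
  { destruct Hsides as [[Hl Hrr]|[Hl Hrr]].
    - assert (Z s < 0) by (apply Hl; unfold s; lra).
      assert (0 < Z u) by (apply Hrr; unfold u; lra). repeat split; intros; lra.
    - assert (0 < Z s) by (apply Hl; unfold s; lra).
      assert (Z u < 0) by (apply Hrr; unfold u; lra). repeat split; intros; lra. }
  assert (Hut : 0 < Z u <-> 0 < Z t).
  { apply sign_const; unfold u; try lra.
    intros z Hz Hz0. destruct (Req_dec z t) as [->|Hne]; [contradiction|].
    assert (Hz' : In z l) by (apply l_zeros; split; [lra | exact Hz0]).
    pose proof (Hmax z Hz' ltac:(lra)); lra. }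
  assert (Hstep : count_below l t = S (count_below l s)).
  { apply (count_below_step l s t r); unfold s; auto; try lra.
    intros x Hx Hxs. pose proof (Hmax x Hx ltac:(lra)).
    destruct (Req_dec x r) as [|Hne]; [assumption|].
    pose proof (Ha x Hx ltac:(lra)); lra. }
  exists s. split; [unfold s; lra|]. split; [apply Hopp|]. split; [lia|].
  destruct Hopp as [_ [Hzu Hsu]]. rewrite Hsu.
  pose proof (Rtotal_order (Z u) 0); pose proof (Rtotal_order (Z t) 0).
  destruct Hut; intuition lra.
Qed.

Lemma sign_parity n : forall t, 0 <= t < T -> Z t <> 0 ->
  count_below l t = n -> (0 < Z t <-> Nat.Odd n).
Proof.
  induction n as [|m IH]; intros t Ht Hzt Hcnt.
  - pose proof (negative_before_zeros t Ht Hzt Hcnt).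
    split; [lra | intros [p Hp]; lia].
  - destruct (cross_last_zero t m Ht Hzt Hcnt) as [s [Hs [Hzs [Hcs Hsign]]]].
    assert (IHs := IH s ltac:(lra) Hzs Hcs).
    rewrite Nat.Odd_succ.
    pose proof (Nat.Even_Odd_False m). destruct (Nat.Even_or_Odd m) as [Ev|Od].
    + split; [intros _; exact Ev | intros _].
      destruct (Rtotal_order (Z t) 0) as [Hneg|[|]]; [|contradiction|assumption].
      apply Hsign, IHs in Hneg. tauto.
    + split; [|tauto]. intros Hpos.
      apply IHs, Hsign in Od. lra.
Qed.

Lemma even_sign_changes : 0 < T ->
  (exists a, a < T /\ forall t, 0 <= t -> a < t < T -> Z t < 0) ->
  Nat.Even (length l).
Proof.
  intros HT [a0 [Ha0 Hend]].
  destruct (gap_below l T) as [a [HaT Ha]].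
  set (lo := Rmax (Rmax a a0) 0).
  assert (Hlo : a <= lo /\ a0 <= lo /\ 0 <= lo /\ lo < T).
  { unfold lo. pose proof (Rmax_l (Rmax a a0) 0). pose proof (Rmax_r (Rmax a a0) 0).
    pose proof (Rmax_l a a0); pose proof (Rmax_r a a0).
    repeat split; try lra. apply Rmax_lub_lt; [apply Rmax_lub_lt|]; lra. }
  set (t := (lo + T) / 2).
  assert (Zt : Z t < 0) by (apply Hend; unfold t; lra).
  assert (Hcnt : count_below l t = length l).
  { apply count_below_all. intros x Hx.
    destruct (proj1 (l_zeros x) Hx) as [Hx0 _].
    pose proof (Ha x Hx ltac:(lra)). unfold t; lra. }
  destruct (Nat.Even_or_Odd (length l)) as [Ev|Od]; [exact Ev|].
  apply (sign_parity _ t ltac:(unfold t; lra) ltac:(lra) Hcnt) in Od. lra.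
Qed.

End SignChanges.

Lemma negative_without_zeros (Z : R -> R) (T : R) :
  (forall t, 0 <= t < T -> continuity_pt Z t) -> Z 0 < 0 ->
  (forall t, 0 <= t < T -> Z t <> 0) -> forall t, 0 <= t < T -> Z t < 0.
Proof.
  intros Hc H0 Hnz t Ht.
  apply (negative_before_zeros Z T nil Hc H0); [|exact Ht | apply Hnz, Ht | reflexivity].
  intros s; split; [intros [] | intros [Hs Hz]; exact (Hnz s Hs Hz)].
Qed.

Lemma acos_ge_half_pi (r : R) : -1 < r < 0 -> PI / 2 <= acos r.
Proof.
  intros Hr. unfold acos.
  destruct (Rle_dec r (-1)); [lra|]. destruct (Rle_dec 1 r); [lra|].
  assert (Hs : 0 < sqrt (1 - r²)) by (apply sqrt_lt_R0; unfold Rsqr; nra).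
  assert (Hq : r / sqrt (1 - r²) < 0).
  { unfold Rdiv. pose proof (Rinv_0_lt_compat _ Hs). nra. }
  apply atan_increasing in Hq. rewrite atan_0 in Hq. lra.
Qed.

Definition discr (beta dbeta : R -> R) (delta tau : R) : R :=
  Bcoef beta dbeta delta tau ^ 2 - Acoef beta delta tau ^ 2.

Section Frequencies.
Variables (delta : R) (beta dbeta : R -> R) (T : R).
Hypothesis A_lt_negB : forall tau, 0 <= tau < T ->
  0 < Acoef beta delta tau < - Bcoef beta dbeta delta tau.

Lemma discr_pos tau : 0 <= tau < T -> 0 < discr beta dbeta delta tau.
Proof. intros Ht. pose proof (A_lt_negB tau Ht). unfold discr; nra. Qed.

Lemma ratio_range tau : 0 <= tau < T ->
  -1 < Acoef beta delta tau / Bcoef beta dbeta delta tau < 0.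
Proof.
  intros Ht. destruct (A_lt_negB tau Ht) as [HA HAB].
  set (A := Acoef beta delta tau) in *; set (B := Bcoef beta dbeta delta tau) in *.
  assert (HiB : / B < 0) by (apply Rinv_lt_0_compat; lra).
  split; [|unfold Rdiv; nra].
  apply (Rmult_lt_reg_r (- B)); [lra|].
  unfold Rdiv. replace (A * / B * - B) with (- A) by (field; lra). lra.
Qed.

(* Since [acos (A/B) >= PI/2], every [Z_k] lies below [tau - (PI/2)/sqrt discr]. *)
Lemma Zk_upper k tau : 0 <= tau < T ->
  Zk beta dbeta delta k tau <= tau - (PI / 2) / sqrt (discr beta dbeta delta tau).
Proof.
  intros Ht. pose proof (sqrt_lt_R0 _ (discr_pos tau Ht)) as Hs.
  pose proof (acos_ge_half_pi _ (ratio_range tau Ht)).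
  pose proof (pos_INR k). pose proof PI_RGT_0.
  unfold Zk, tau_k. fold (discr beta dbeta delta tau).
  set (a := acos (Acoef beta delta tau / Bcoef beta dbeta delta tau)) in *.
  set (q := sqrt (discr beta dbeta delta tau)) in *.
  assert (PI / 2 / q <= (a + 2 * INR k * PI) / q)
    by (apply Rmult_le_compat_r; [left; apply Rinv_0_lt_compat, Hs | nra]).
  lra.
Qed.

Lemma Zk_at_zero k : 0 < T -> Zk beta dbeta delta k 0 < 0.
Proof.
  intros HT. pose proof (Zk_upper k 0 ltac:(lra)).
  pose proof (sqrt_lt_R0 _ (discr_pos 0 ltac:(lra))). pose proof PI_RGT_0.
  assert (0 < PI / 2 / sqrt (discr beta dbeta delta 0)) by (apply Rdiv_lt_0_compat; lra).
  lra.
Qed.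

(* Consecutive branches differ by [2 PI / sqrt discr > 0]. *)
Lemma Zk_decreasing_in_k i j tau : (i < j)%nat -> 0 <= tau < T ->
  Zk beta dbeta delta j tau < Zk beta dbeta delta i tau.
Proof.
  intros Hij Ht. apply lt_INR in Hij. pose proof PI_RGT_0.
  pose proof (Rinv_0_lt_compat _ (sqrt_lt_R0 _ (discr_pos tau Ht))) as Hq.
  unfold Zk, tau_k, Rdiv. fold (discr beta dbeta delta tau).
  set (q := / sqrt (discr beta dbeta delta tau)) in *.
  set (a := acos (Acoef beta delta tau / Bcoef beta dbeta delta tau)).
  assert (0 < (INR j - INR i) * PI * q) by (apply Rmult_lt_0_compat; nra).
  nra.
Qed.

Lemma Zk_continuous k tau : 0 <= tau < T ->
  continuity_pt (Acoef beta delta) tau -> continuity_pt (Bcoef beta dbeta delta) tau ->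
  continuity_pt (Zk beta dbeta delta k) tau.
Proof.
  intros Ht HA HB. pose proof (ratio_range tau Ht). pose proof (discr_pos tau Ht).
  pose proof (A_lt_negB tau Ht).
  apply cont_minus; [apply cont_id|]. apply cont_div.
  - apply cont_plus; [|apply cont_const].
    apply (cont_comp acos (fun t => Acoef beta delta t / Bcoef beta dbeta delta t)).
    + apply cont_div; [exact HA | exact HB | lra].
    + apply derivable_continuous_pt, derivable_pt_acos; lra.
  - apply (cont_comp sqrt (discr beta dbeta delta)).
    + apply cont_minus; apply cont_sq; assumption.
    + apply continuity_pt_sqrt; lra.
  - pose proof (sqrt_lt_R0 _ (discr_pos tau Ht)). unfold discr in *; lra.
Qed.

(* If the discriminant is continuous at [T] and non-positive there, then
   [sqrt discr] tends to 0 as [tau -> T-], so [Z_k] tends to [-oo]. *)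
Lemma Zk_to_minus_infinity k :
  continuity_pt (discr beta dbeta delta) T -> discr beta dbeta delta T <= 0 ->
  forall M, exists eps, 0 < eps /\
    forall tau, 0 <= tau -> T - eps < tau < T -> Zk beta dbeta delta k tau < M.
Proof.
  intros HD HDT M. pose proof PI_RGT_0.
  destruct (Rle_dec T M) as [HTM|HMT].
  { exists 1. split; [lra|]. intros tau H0 Ht.
    pose proof (Zk_upper k tau ltac:(lra)).
    pose proof (sqrt_lt_R0 _ (discr_pos tau ltac:(lra))).
    assert (0 < PI / 2 / sqrt (discr beta dbeta delta tau)) by (apply Rdiv_lt_0_compat; lra).
    lra. }
  set (c := (PI / 2) / (T - M)).
  assert (Hc : 0 < c) by (apply Rdiv_lt_0_compat; lra).
  destruct (continuity_pt_bound _ T HD (c ^ 2) ltac:(nra)) as [alp [Halp Hclose]].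
  exists alp. split; [exact Halp|]. intros tau H0 Ht.
  pose proof (Zk_upper k tau ltac:(lra)).
  pose proof (discr_pos tau ltac:(lra)).
  assert (Hd := Hclose tau ltac:(apply Rabs_def1; lra)). apply Rabs_def2 in Hd.
  assert (Hsq : sqrt (discr beta dbeta delta tau) < c).
  { rewrite <- (sqrt_pow2 c) by lra. apply sqrt_lt_1; nra. }
  assert (PI / 2 / c < PI / 2 / sqrt (discr beta dbeta delta tau)).
  { unfold Rdiv. apply Rmult_lt_compat_l; [lra|].
    apply Rinv_lt_contravar; [apply Rmult_lt_0_compat, Hc; apply sqrt_lt_R0|]; lra. }
  assert (PI / 2 / c = T - M) by (unfold c; field; lra).
  lra.
Qed.

End Frequencies.
Section Threshold.
Variables (delta : R) (beta dbeta : R -> R) (tau_star : R).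
Hypothesis delta_pos : 0 < delta.
Hypothesis beta_pos : forall s, 0 <= s -> 0 < beta s.
Hypothesis beta_cont : forall s, 0 <= s -> continuity_pt beta s.
Hypothesis dbeta_cont : forall s, 0 <= s -> continuity_pt dbeta s.
Hypothesis beta_decr : forall s t, 0 <= s -> s < t -> beta t < beta s.
Hypothesis beta_vanish : forall eps, 0 < eps -> exists M, forall S, M < S -> beta S < eps.
Hypothesis delta_lt_beta0 : delta < beta 0.
Hypothesis tau_star_range : 0 < tau_star < tau_bar beta delta.
Hypothesis tau_star_char : forall tau, 0 <= tau < tau_bar beta delta ->
  (Acoef beta delta tau < Rabs (Bcoef beta dbeta delta tau) <-> tau < tau_star).
Hypothesis B_neg : forall tau, 0 <= tau < tau_star -> Bcoef beta dbeta delta tau < 0.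

Lemma A_lt_negB_before_threshold tau : 0 <= tau < tau_star ->
  0 < Acoef beta delta tau < - Bcoef beta dbeta delta tau.
Proof.
  intros Ht. rewrite <- (Rabs_left _ (B_neg tau Ht)).
  destruct (Sstar_spec delta beta delta_pos beta_cont beta_vanish delta_lt_beta0 tau
              ltac:(lra)) as [HS _].
  pose proof (beta_pos _ HS). split; [unfold Acoef; lra|].
  apply tau_star_char; lra.
Qed.

Lemma discr_nonpos_at_threshold : discr beta dbeta delta tau_star <= 0.
Proof.
  assert (Hn : ~ Acoef beta delta tau_star < Rabs (Bcoef beta dbeta delta tau_star))
    by (intros Hx; apply (tau_star_char tau_star ltac:(lra)) in Hx; lra).
  unfold discr. rewrite <- (pow2_abs (Bcoef beta dbeta delta tau_star)).
  pose proof (Rabs_pos (Bcoef beta dbeta delta tau_star)). nra.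
Qed.

Lemma Zk_continuous_before_threshold k t : 0 <= t < tau_star ->
  continuity_pt (Zk beta dbeta delta k) t.
Proof.
  intros Ht. apply (Zk_continuous delta beta dbeta tau_star A_lt_negB_before_threshold k t Ht).
  - apply Acoef_continuous; auto; lra.
  - apply Bcoef_continuous; auto; lra.
Qed.

Lemma Zk_diverges_at_threshold k : forall M, exists eps, 0 < eps /\
  forall tau, 0 <= tau -> tau_star - eps < tau < tau_star -> Zk beta dbeta delta k tau < M.
Proof.
  apply (Zk_to_minus_infinity delta beta dbeta tau_star A_lt_negB_before_threshold k).
  - apply cont_minus; apply cont_sq; [apply Bcoef_continuous | apply Acoef_continuous];
      auto; lra.
  - exact discr_nonpos_at_threshold.
Qed.

End Threshold.

Theorem lemma5p3
  (delta : R) (beta dbeta : R -> R) (tau_star : R)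
  (Hdelta : 0 < delta)
  (Hpos : forall s, 0 <= s -> 0 < beta s)
  (Hderiv : forall s, 0 <= s -> derivable_pt_lim beta s (dbeta s))
  (Hcont : forall s, 0 <= s -> continuity_pt dbeta s)
  (Hdec : forall s t, 0 <= s -> s < t -> beta t < beta s)
  (Hdneg : forall s, 0 < s -> dbeta s < 0)
  (Hlim : forall eps, 0 < eps -> exists M, forall S, M < S -> beta S < eps)
  (Hdb0 : delta < beta 0)
  (H1 : forall y1 y2, 0 <= y1 -> y1 <= y2 -> y2 <= beta_inv beta delta ->
          y2 * dbeta y2 <= y1 * dbeta y1)
  (H2 : beta_inv beta delta * dbeta (beta_inv beta delta) < - 4 * delta)
  (Hts : 0 < tau_star < tau_bar beta delta)
  (Hts_char : forall tau, 0 <= tau < tau_bar beta delta ->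
     (Acoef beta delta tau < Rabs (Bcoef beta dbeta delta tau) <-> tau < tau_star))
  (HBneg : forall tau, 0 <= tau < tau_star -> Bcoef beta dbeta delta tau < 0) :
  forall k : nat,
    Zk beta dbeta delta k 0 < 0
    /\ (forall M, exists eps, 0 < eps /\
          forall tau, 0 <= tau -> tau_star - eps < tau < tau_star ->
            Zk beta dbeta delta k tau < M)
    /\ (forall l : list R, NoDup l ->
          (forall t, In t l <-> (0 <= t < tau_star /\ Zk beta dbeta delta k t = 0)) ->
          (forall t, In t l -> changes_sign_at (Zk beta dbeta delta k) t) ->
          Nat.Even (length l))
    /\ (forall tau, 0 <= tau < tau_star ->
          Zk beta dbeta delta (S k) tau < Zk beta dbeta delta k tau)
    /\ ((forall tau, 0 <= tau < tau_star -> Zk beta dbeta delta k tau <> 0) ->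
        forall j : nat, (k < j)%nat ->
          forall tau, 0 <= tau < tau_star -> Zk beta dbeta delta j tau <> 0).
Proof.
  intros k.
  assert (beta_cont : forall s, 0 <= s -> continuity_pt beta s)
    by (intros s Hs; apply derivable_continuous_pt; exists (dbeta s); exact (Hderiv s Hs)).
  assert (Hgap := A_lt_negB_before_threshold delta beta dbeta tau_star Hdelta Hpos beta_cont
                    Hlim Hdb0 Hts Hts_char HBneg).
  assert (Zcont := Zk_continuous_before_threshold delta beta dbeta tau_star Hdelta Hpos
                     beta_cont Hcont Hdec Hlim Hdb0 Hts Hts_char HBneg).
  assert (Zlim := Zk_diverges_at_threshold delta beta dbeta tau_star Hdelta Hpos
                    beta_cont Hcont Hdec Hlim Hdb0 Hts Hts_char HBneg k).
  assert (Z0 := Zk_at_zero delta beta dbeta tau_star Hgap k (proj1 Hts)).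
  assert (Zdecr := Zk_decreasing_in_k delta beta dbeta tau_star Hgap).
  split; [exact Z0|]. split; [exact Zlim|]. split.
  -
    intros l Hnd Hzeros Hchanges.
    apply (even_sign_changes _ tau_star l (Zcont k) Z0 Hnd Hzeros Hchanges (proj1 Hts)).
    destruct (Zlim 0) as [eps [Heps Hbelow]].
    exists (tau_star - eps); split; [lra|]. intros t Ht0 Ht; apply Hbelow; lra.
  - split; [intros tau Ht; apply Zdecr; [lia | exact Ht]|].
    (* a zero-free [Z_k] stays negative, and the later branches lie below it *)
    intros Hnone j Hkj tau Ht.
    pose proof (negative_without_zeros _ tau_star (Zcont k) Z0 Hnone tau Ht).
    pose proof (Zdecr k j tau Hkj Ht). lra.
Qed.
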